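(* Let $k\ge1$, $n_1,\dots,n_k\ge2$, $n=n_1+\cdots+n_k$, and $C\in\mathbb{S}^{n+1}$. Consider (Spheres-BM): minimize $\langle CY,Y\rangle$ over $Y\in\mathbb{R}^{(n+1)\times p}$ with $Y^\top=(Y_1^\top\ \cdots\ Y_k^\top\ y)$, $Y_i\in\mathbb{R}^{n_i\times p}$, $y\in\mathbb{R}^p$, subject to $\|Y_1\|=\cdots=\|Y_k\|=1$ and $\|y\|=1$; and (Spheres-SDP): minimize $\langle C,X\rangle$ over $X\in\mathbb{S}^{n+1}$ subject to $\operatorname{tr}(X_{11})=\cdots=\operatorname{tr}(X_{kk})=1$, $X_{n+1,n+1}=1$, $X\succeq0$. If $p\ge\max(2,k)$, then every second-order critical point $Y$ of (Spheres-BM) is globally optimal for (Spheres-BM), and $YY^\top$ is globally optimal for (Spheres-SDP).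
   Context: $\langle U,V\rangle=\operatorname{tr}(U^\top V)$, $\|\cdot\|$ Frobenius/Euclidean norm; $\mathbb{S}^{N}$ the real symmetric $N\times N$ matrices. $X_{ii}$ denotes the $n_i\times n_i$ diagonal block of $X$ corresponding to the $i$-th group of coordinates (the first $n$ coordinates are split consecutively into groups of sizes $n_1,\dots,n_k$), and $X_{n+1,n+1}$ its last diagonal entry. Both problems are instances of the general form with constraint matrices $A_i$ ($i=1,\dots,k$) equal to the block-diagonal matrix with $I_{n_i}$ in the $i$-th block and zeros elsewhere, $A_{k+1}=e_{n+1}e_{n+1}^\top$, and all right-hand sides equal to $1$; write $\mathcal{A}(X)_i=\langle A_i,X\rangle$, $\mathcal{A}^*(\nu)=\sum_i\nu_iA_i$. For feasible $Y$: $T_Y=\{\dot Y:\langle A_iY,\dot Y\rangle=0\ \forall i\}$; $G_{ij}=\langle A_iY,A_jY\rangle$; $\mu=G^\dagger\mathcal{A}(CYY^\top)$; $S(Y)=C-\mathcal{A}^*(\mu)$. $Y$ is second-order critical if $S(Y)Y=0$ and $\langle\dot Y,S(Y)\dot Y\rangle\ge0$ for all $\dot Y\in T_Y$. *)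

From HB Require Import structures.
From mathcomp Require Import all_boot all_order all_algebra.
From mathcomp Require Import reals.
From Stdlib Require Import ClassicalEpsilon.
Set Implicit Arguments. Unset Strict Implicit. Unset Printing Implicit Defensive.
Import Order.TTheory GRing.Theory Num.Theory.
Local Open Scope ring_scope.

Section General.
Variable R : realType.

Definition inner (m q : nat) (U V : 'M[R]_(m, q)) : R := \tr (U^T *m V).

(* Moore-Penrose pseudo-inverse, characterised by the four Penrose equations
   (it always exists and is unique over the reals). *)
Definition penrose (m : nat) (G X : 'M[R]_m) : Prop :=
  [/\ G *m X *m G = G, X *m G *m X = X, (G *m X)^T = G *m X & (X *m G)^T = X *m G].
Definition mpinv (m : nat) (G : 'M[R]_m) : 'M[R]_m :=
  epsilon (inhabits 0) (penrose G).

Variables (m N : nat) (A : 'I_m -> 'M[R]_N).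

Definition Amap (X : 'M[R]_N) : 'cV[R]_m := \col_i inner (A i) X.
Definition Aadj (nu : 'cV[R]_m) : 'M[R]_N := \sum_i nu i 0 *: A i.

Definition bm_feasible (p : nat) (Y : 'M[R]_(N, p)) : Prop :=
  forall i, inner (A i) (Y *m Y^T) = 1.
Definition bm_cost (C : 'M[R]_N) (p : nat) (Y : 'M[R]_(N, p)) : R :=
  inner (C *m Y) Y.
Definition bm_optimal (C : 'M[R]_N) (p : nat) (Y : 'M[R]_(N, p)) : Prop :=
  bm_feasible Y /\
  forall Z : 'M[R]_(N, p), bm_feasible Z -> bm_cost C Y <= bm_cost C Z.

Definition tangent (p : nat) (Y Yd : 'M[R]_(N, p)) : Prop :=
  forall i, inner (A i *m Y) Yd = 0.
Definition gram (p : nat) (Y : 'M[R]_(N, p)) : 'M[R]_m :=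
  \matrix_(i, j) inner (A i *m Y) (A j *m Y).
Definition mult (C : 'M[R]_N) (p : nat) (Y : 'M[R]_(N, p)) : 'cV[R]_m :=
  mpinv (gram Y) *m Amap (C *m Y *m Y^T).
Definition Smat (C : 'M[R]_N) (p : nat) (Y : 'M[R]_(N, p)) : 'M[R]_N :=
  C - Aadj (mult C Y).

Definition second_order_critical (C : 'M[R]_N) (p : nat) (Y : 'M[R]_(N, p)) :
  Prop :=
  [/\ bm_feasible Y, Smat C Y *m Y = 0 &
      forall Yd : 'M[R]_(N, p), tangent Y Yd -> 0 <= inner Yd (Smat C Y *m Yd)].

Definition psd (X : 'M[R]_N) : Prop :=
  X^T = X /\ forall v : 'cV[R]_N, 0 <= (v^T *m X *m v) 0 0.
Definition sdp_feasible (X : 'M[R]_N) : Prop :=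
  X^T = X /\ (forall i, inner (A i) X = 1) /\ psd X.
Definition sdp_optimal (C : 'M[R]_N) (X : 'M[R]_N) : Prop :=
  sdp_feasible X /\
  forall X' : 'M[R]_N, sdp_feasible X' -> inner C X <= inner C X'.

End General.

(* The sphere constraints: coordinates 0..n-1 split consecutively into groups of
   sizes ns 0, ..., ns (k-1), n = sum ns; last coordinate index n.
   Constraint index i : 'I_k.+1; i < k is group i, i = k is the last entry. *)
Section Spheres.
Variable R : realType.
Variables (k : nat) (ns : 'I_k -> nat).

Definition nsum : nat := \sum_(i < k) ns i.
Definition offset (l : 'I_k) : nat := \sum_(j < k | (j < l)%N) ns j.

Definition in_block (i : 'I_k.+1) (a : 'I_nsum.+1) : bool :=
  [exists l : 'I_k, (val l == val i) && (offset l <= a < offset l + ns l)%N]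
  || ((val i == k) && (val a == nsum)).

Definition spheresA (i : 'I_k.+1) : 'M[R]_nsum.+1 :=
  \matrix_(a, b) (if (a == b) && in_block i a then 1 else 0).

End Spheres.

From HB Require Import structures.
From mathcomp Require Import all_boot all_order all_algebra.
From mathcomp Require Import reals.
From mathcomp Require Import ring lra.
Set Implicit Arguments. Unset Strict Implicit. Unset Printing Implicit Defensive.
Import Order.TTheory GRing.Theory Num.Theory.
Local Open Scope ring_scope.

(* If u^T S(Y) u < 0, every direction Yd = u z + Y W has
   <Yd, S(Y) Yd> = (u^T S(Y) u) |z|^2 because S(Y) Y = 0, so second-order
   criticality rules out such tangent directions with z <> 0.  One always
   exists: if all the p x p matrices Y^T A_i Y coincide, they equal y y^T with
   y = Y^T e_(n+1) (the last constraint has rank one), and any z orthogonal to y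
   works with W = 0 since p >= 2.  Otherwise let W range over the span of two
   distinct Y^T A_i Y: the k + 1 tangency equations in the p + 2 unknowns have
   a nonzero solution, and z = 0 would force W = 0 and then, the traces being
   1, both coefficients to vanish.  Hence S(Y) is positive semidefinite, and as
   C = S(Y) + A^*(mu), every SDP-feasible X has
   <C, X> = tr(S(Y) X) + sum mu >= sum mu = <C, Y Y^T>. *)

Lemma kermx_nonzero_row (F : fieldType) q r (L : 'M[F]_(q, r)) : (r < q)%N ->
  exists2 x : 'rV[F]_q, x != 0 & x *m L = 0.
Proof.
move=> lt_rq; have /rowV0Pn[x /sub_kermxP xL0 x_neq0] : kermx L != 0.
  by rewrite -mxrank_eq0 mxrank_ker subn_eq0 -ltnNge (leq_ltn_trans (rank_leq_col L)).
by exists x.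
Qed.

Section RealMatrices.
Variable R : realFieldType.

Lemma mxtrace_tmulE m n (X : 'M[R]_(m, n)) :
  \tr (X^T *m X) = \sum_i \sum_j X j i ^+ 2.
Proof. by apply: eq_bigr => i _; rewrite mxE; apply: eq_bigr => j _; rewrite mxE. Qed.

Lemma mxtrace_tmul_ge0 m n (X : 'M[R]_(m, n)) : 0 <= \tr (X^T *m X).
Proof. by rewrite mxtrace_tmulE; do 2!apply: sumr_ge0 => ? _; apply: sqr_ge0. Qed.

Lemma mxtrace_tmul_eq0 m n (X : 'M[R]_(m, n)) : (\tr (X^T *m X) == 0) = (X == 0).
Proof.
apply/idP/eqP => [|->]; last by rewrite mulmx0 mxtrace0.
rewrite mxtrace_tmulE psumr_eq0 => [/allP X0|i _]; last first.
  by apply: sumr_ge0 => j _; apply: sqr_ge0.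
apply/matrixP => j i; move: (X0 i (mem_index_enum i)).
rewrite psumr_eq0 => [/allP/(_ j (mem_index_enum j))|]; last by move=> *; apply: sqr_ge0.
by rewrite sqrf_eq0 mxE => /eqP.
Qed.

Lemma quadratic_ge0_discr (a b c : R) : 0 <= c ->
  (forall t, 0 <= a + 2 * b * t + c * t ^+ 2) -> b ^+ 2 <= a * c.
Proof.
move=> c_ge0 q_ge0; have [c_gt0|] := boolP (0 < c).
  have := q_ge0 (- b / c).
  have -> : a + 2 * b * (- b / c) + c * (- b / c) ^+ 2 = (a * c - b ^+ 2) / c.
    by field; rewrite gt_eqF.
  by rewrite pmulr_lge0 ?invr_gt0 // subr_ge0.
rewrite lt_def c_ge0 andbT negbK => /eqP c0.
have [->|b_neq0] := eqVneq b 0; first by rewrite c0 expr0n mulr0.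
have := q_ge0 (- (a + 1) / (2 * b)); rewrite c0 mul0r addr0.
have -> : 2 * b * (- (a + 1) / (2 * b)) = - (a + 1) by field; rewrite ?pnatr_eq0.
lra.
Qed.

Definition qform n (X : 'M[R]_n) (v w : 'cV[R]_n) : R := (v^T *m X *m w) 0 0.

Lemma qformC n (X : 'M[R]_n) v w : X^T = X -> qform X w v = qform X v w.
Proof.
move=> X_sym; rewrite /qform -[in LHS](trmxK (w^T *m X *m v)) mxE.
by rewrite !trmx_mul trmxK X_sym mulmxA.
Qed.

Lemma qform_delta n (X : 'M[R]_n) a b :
  qform X (delta_mx a 0) (delta_mx b 0) = X a b.
Proof. by rewrite /qform trmx_delta -rowE -colE !mxE. Qed.

Lemma qformDZ n (X : 'M[R]_n) v w t : X^T = X ->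
  qform X (v + t *: w) (v + t *: w) =
  qform X v v + 2 * qform X v w * t + qform X w w * t ^+ 2.
Proof.
move=> X_sym; rewrite /qform; have -> : (v + t *: w)^T = v^T + t *: w^T.
  by apply/matrixP => i j; rewrite !mxE.
rewrite !(mulmxDl, mulmxDr) -!(scalemxAl, scalemxAr) -!trace_mx11.
rewrite !(mxtraceD, mxtraceZ) !trace_mx11 -/(qform X w v) -/(qform X v w) qformC //.
ring.
Qed.

Lemma psd_qform_CauchySchwarz n (X : 'M[R]_n) v w : X^T = X ->
  (forall u, 0 <= qform X u u) -> qform X v w ^+ 2 <= qform X v v * qform X w w.
Proof. by move=> X_sym X_psd; apply: quadratic_ge0_discr => // t; rewrite -qformDZ. Qed.

End RealMatrices.

Section PsdTrace.
Variables (R : realFieldType) (n : nat).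
Implicit Types (S X : 'M[R]_n).

Definition deflate X (c : 'I_n) : 'M[R]_n :=
  X - (X c c)^-1 *: (col c X *m (col c X)^T).

Lemma deflateE X c a b : deflate X c a b = X a b - (X c c)^-1 * (X a c * X b c).
Proof. by rewrite !mxE big_ord1 !mxE. Qed.

Lemma sym_entry X a b : X^T = X -> X b a = X a b.
Proof. by move=> X_sym; rewrite -[in LHS]X_sym mxE. Qed.

Lemma deflate_sym X c : X^T = X -> (deflate X c)^T = deflate X c.
Proof.
move=> X_sym; apply/matrixP => a b.
by rewrite mxE !deflateE (sym_entry a b X_sym) [X b c * _]mulrC.
Qed.

Lemma psd_diag_ge0 X c : (forall u, 0 <= qform X u u) -> 0 <= X c c.
Proof. by move=> X_psd; rewrite -qform_delta. Qed.

Lemma psd_row_eq0 X c b : X^T = X -> (forall u, 0 <= qform X u u) ->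
  X c c = 0 -> X c b = 0.
Proof.
move=> X_sym X_psd Xcc0; apply/eqP; rewrite -sqrf_eq0 eq_le sqr_ge0 andbT.
have := psd_qform_CauchySchwarz (delta_mx c 0) (delta_mx b 0) X_sym X_psd.
by rewrite !qform_delta Xcc0 mul0r.
Qed.

Lemma deflate_psd X c : X^T = X -> (forall u, 0 <= qform X u u) -> 0 < X c c ->
  forall u, 0 <= qform (deflate X c) u u.
Proof.
move=> X_sym X_psd Xcc_gt0 u.
have colXu : ((col c X)^T *m u) 0 0 = qform X u (delta_mx c 0).
  by rewrite colE trmx_mul X_sym qformC.
have -> : qform (deflate X c) u u
    = qform X u u - (X c c)^-1 * ((col c X)^T *m u) 0 0 ^+ 2.
  rewrite /qform /deflate mulmxBr mulmxBl -scalemxAr -scalemxAl.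
  have -> : u^T *m (col c X *m (col c X)^T) *m u
      = ((col c X)^T *m u)^T *m ((col c X)^T *m u).
    by rewrite trmx_mul trmxK !mulmxA.
  by rewrite -!trace_mx11 linearB linearZ /= mxtrace_tmulE !big_ord1 !trace_mx11.
rewrite colXu subr_ge0 mulrC ler_pdivrMr // -[X c c]qform_delta.
exact: psd_qform_CauchySchwarz.
Qed.

Lemma psd_mxtrace_mul_ge0 S X : (forall u, 0 <= qform S u u) ->
  X^T = X -> (forall u, 0 <= qform X u u) -> 0 <= \tr (S *m X).
Proof.
move=> S_psd; suff rows_ge0 m : forall X, X^T = X -> (forall u, 0 <= qform X u u) ->
    (forall a b : 'I_n, (m <= a)%N -> X a b = 0) -> 0 <= \tr (S *m X).
  by move=> X_sym X_psd; apply: (rows_ge0 n) => // a b; rewrite leqNgt ltn_ord.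
elim: m => [|m IHm] {}X X_sym X_psd Xrows.
  have -> : X = 0 by apply/matrixP => a b; rewrite mxE Xrows.
  by rewrite mulmx0 mxtrace0.
have [lt_mn|le_nm] := ltnP m n; last first.
  by apply: IHm => // a b; rewrite leqNgt (leq_trans (ltn_ord a)).
pose c := Ordinal lt_mn.
have Xrows_c (a b : 'I_n) : (m <= a)%N -> a != c -> X a b = 0.
  move=> le_ma a_neq_c; apply: Xrows; rewrite ltn_neqAle le_ma andbT.
  by apply: contra a_neq_c => /eqP ma; apply/eqP/val_inj.
have [Xcc_gt0|] := boolP (0 < X c c); last first.
  rewrite lt_def psd_diag_ge0 // andbT negbK => /eqP Xcc0.
  apply: IHm => // a b le_ma; have [->|] := eqVneq a c; last exact: Xrows_c.
  exact: psd_row_eq0.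
rewrite -(subrK ((X c c)^-1 *: (col c X *m (col c X)^T)) X) -/(deflate X c).
rewrite mulmxDr mxtraceD -scalemxAr mxtraceZ; apply: addr_ge0.
  apply: IHm; [exact: deflate_sym | exact: deflate_psd | move=> a b le_ma].
  rewrite deflateE; have [->|a_neq_c] := eqVneq a c.
    by rewrite (sym_entry b c X_sym) mulrA mulVf ?mul1r ?subrr // gt_eqF.
  by rewrite (Xrows_c a b) // (Xrows_c a c) // mul0r mulr0 subr0.
apply: mulr_ge0; first by rewrite invr_ge0 ltW.
by rewrite mulmxA mxtrace_mulC mulmxA trace_mx11; apply: S_psd.
Qed.

End PsdTrace.

Section GeneralForm.
Variables (R : realType) (m n : nat) (A : 'I_m -> 'M[R]_n).

Lemma innerDl q r (U V X : 'M[R]_(q, r)) : inner (U + V) X = inner U X + inner V X.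
Proof. by rewrite /inner linearD mulmxDl mxtraceD. Qed.

Lemma inner_Aadj nu (X : 'M[R]_n) : inner (Aadj A nu) X = \sum_i nu i 0 * inner (A i) X.
Proof.
rewrite /inner /Aadj raddf_sum mulmx_suml raddf_sum; apply: eq_bigr => i _.
by rewrite /= linearZ /= -scalemxAl mxtraceZ.
Qed.

Lemma bm_cost_gram C p (Z : 'M[R]_(n, p)) : bm_cost C Z = inner C (Z *m Z^T).
Proof. by rewrite /bm_cost /inner trmx_mul mulmxA [in RHS]mxtrace_mulC mulmxA. Qed.

Lemma gram_sdp_feasible p (Z : 'M[R]_(n, p)) : bm_feasible A Z -> sdp_feasible A (Z *m Z^T).
Proof.
have ZZ_sym : (Z *m Z^T)^T = Z *m Z^T by rewrite trmx_mul trmxK.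
move=> Z_feas; split=> //; split=> //; split=> // v.
have -> : v^T *m (Z *m Z^T) *m v = (Z^T *m v)^T *m (Z^T *m v).
  by rewrite trmx_mul trmxK !mulmxA.
by rewrite -trace_mx11 mxtrace_tmul_ge0.
Qed.

Lemma sdp_optimal_of_dual_certificate C nu p (Y : 'M[R]_(n, p)) :
  bm_feasible A Y -> psd (C - Aadj A nu) -> (C - Aadj A nu) *m Y = 0 ->
  sdp_optimal A C (Y *m Y^T).
Proof.
move=> Y_feas [S_sym S_psd] SY0.
have value X : (forall i, inner (A i) X = 1) ->
    inner C X = \tr ((C - Aadj A nu) *m X) + \sum_i nu i 0.
  move=> X_feas; rewrite -{1}(subrK (Aadj A nu) C) innerDl inner_Aadj {1}/inner S_sym.
  by congr (_ + _); apply: eq_bigr => i _; rewrite X_feas mulr1.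
split=> [|X [_ [X_feas [X_sym X_psd]]]]; first exact: gram_sdp_feasible.
rewrite value // (value X) // mulmxA SY0 mul0mx mxtrace0 add0r lerDr.
exact: psd_mxtrace_mul_ge0.
Qed.

Lemma bm_optimal_of_sdp_optimal C p (Y : 'M[R]_(n, p)) :
  bm_feasible A Y -> sdp_optimal A C (Y *m Y^T) -> bm_optimal A C Y.
Proof.
move=> Y_feas [_ Y_opt]; split=> // Z Z_feas.
by rewrite !bm_cost_gram; apply/Y_opt/gram_sdp_feasible.
Qed.

Lemma Aadj_sym nu : (forall i, (A i)^T = A i) -> (Aadj A nu)^T = Aadj A nu.
Proof.
by move=> A_sym; rewrite /Aadj raddf_sum; apply: eq_bigr => i _; rewrite /= linearZ /= A_sym.
Qed.

Lemma Smat_sym C p (Y : 'M[R]_(n, p)) : (forall i, (A i)^T = A i) -> C^T = C ->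
  (Smat A C Y)^T = Smat A C Y.
Proof. by move=> A_sym C_sym; rewrite /Smat raddfB /= C_sym Aadj_sym. Qed.

End GeneralForm.

Section EscapeDirections.
Variables (R : realType) (m n p : nat) (A : 'I_m -> 'M[R]_n) (Y : 'M[R]_(n, p)).

Definition compress (i : 'I_m) : 'M[R]_p := Y^T *m A i *m Y.

Lemma inner_escape_dir (S : 'M[R]_n) u (z : 'rV_p) W : S^T = S -> S *m Y = 0 ->
  inner (u *m z + Y *m W) (S *m (u *m z + Y *m W)) = qform S u u * \tr (z^T *m z).
Proof.
move=> S_sym SY0; have YS0 : Y^T *m S = 0 by rewrite -S_sym -trmx_mul SY0 trmx0.
rewrite mulmxDr (mulmxA S Y) SY0 mul0mx addr0 /inner linearD /= mulmxDl mxtraceD.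
have -> : (Y *m W)^T *m (S *m (u *m z)) = 0.
  by rewrite trmx_mul -mulmxA (mulmxA Y^T) YS0 mul0mx mulmx0.
rewrite mxtrace0 addr0 trmx_mul.
have -> : z^T *m u^T *m (S *m (u *m z)) = z^T *m (u^T *m S *m u) *m z by rewrite !mulmxA.
by rewrite [u^T *m S *m u]mx11_scalar mul_mx_scalar -scalemxAl mxtraceZ.
Qed.

Hypothesis A_sym : forall i, (A i)^T = A i.

Lemma compress_sym i : (compress i)^T = compress i.
Proof. by rewrite /compress !trmx_mul trmxK A_sym mulmxA. Qed.

Lemma mxtrace_compress i : bm_feasible A Y -> \tr (compress i) = 1.
Proof.
move=> Y_feas; rewrite -(Y_feas i) /inner A_sym /compress.
by rewrite [RHS]mxtrace_mulC [LHS]mxtrace_mulC !mulmxA.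
Qed.

Lemma inner_constraint_dir i u (z : 'rV_p) W :
  inner (A i *m Y) (u *m z + Y *m W) =
  (z *m (Y^T *m A i *m u)) 0 0 + \tr (compress i *m W).
Proof.
rewrite /inner mulmxDr mxtraceD trmx_mul A_sym !mulmxA mxtrace_mulC.
by rewrite !mulmxA -trace_mx11.
Qed.

Lemma tangent_dir_rank_one (y : 'cV_p) u :
  (forall i, A i *m A i = A i) -> (forall i, compress i = y *m y^T) -> (1 < p)%N ->
  exists2 z : 'rV_p, z != 0 & tangent A Y (u *m z).
Proof.
move=> A_idem compress_y lt1p; have [z z_neq0 zy0] := kermx_nonzero_row y lt1p.
exists z => // i.
have AYz0 : A i *m Y *m z^T = 0.
  apply/eqP; rewrite -mxtrace_tmul_eq0.
  have -> : (A i *m Y *m z^T)^T *m (A i *m Y *m z^T) = z *m compress i *m z^T.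
    by rewrite !trmx_mul trmxK A_sym /compress -!mulmxA (mulmxA (A i)) A_idem !mulmxA.
  by rewrite compress_y mulmxA -mulmxA -trmx_mul zy0 mul0mx mxtrace0.
have zYA0 : z *m Y^T *m A i = 0.
  by rewrite -A_sym -[z]trmxK -!trmx_mul mulmxA AYz0 trmx0.
by rewrite /inner mxtrace_mulC trmx_mul A_sym !mulmxA -!(mulmxA u) zYA0 mulmx0 mxtrace0.
Qed.

Lemma tangent_dir_span r (B : 'I_r -> 'I_m) u : (m < p + r)%N ->
  exists2 x : 'rV_(p + r), x != 0 &
    tangent A Y (u *m lsubmx x + Y *m \sum_b rsubmx x 0 b *: compress (B b)).
Proof.
pose Lz : 'M_(p, m) := \matrix_(a, j) (Y^T *m A j *m u) a 0.
pose Lt : 'M_(r, m) := \matrix_(b, j) \tr (compress j *m compress (B b)).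
move=> lt_m; have [x x_neq0 xL0] := kermx_nonzero_row (col_mx Lz Lt) lt_m.
exists x => // j; rewrite inner_constraint_dir.
move/matrixP: xL0 => /(_ 0 j); rewrite -{1}[x]hsubmxK mul_row_col mxE [RHS]mxE => <-.
congr (_ + _); rewrite !mxE; first by apply: eq_bigr => a _; rewrite !mxE.
rewrite mulmx_sumr raddf_sum; apply: eq_bigr => b _.
by rewrite -scalemxAr /= mxtraceZ /Lt !mxE.
Qed.

Lemma span_dir_eq0 r (B : 'I_r -> 'I_m) (t : 'rV_r) :
  let W := \sum_b t 0 b *: compress (B b) in
  (forall j, \tr (compress j *m W) = 0) -> W = 0.
Proof.
move=> W trW0; apply/eqP; rewrite -mxtrace_tmul_eq0.
have -> : W^T = W.
  rewrite /W raddf_sum; apply: eq_bigr => b _.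
  by rewrite /= linearZ /= compress_sym.
rewrite {1}/W mulmx_suml raddf_sum big1 // => b _.
by rewrite -scalemxAl /= mxtraceZ trW0 mulr0.
Qed.

Lemma compress_pair_indep i j (s t : R) : bm_feasible A Y ->
  compress i != compress j -> s *: compress i + t *: compress j = 0 -> s = 0 /\ t = 0.
Proof.
move=> Y_feas neq_ij comb0.
have st0 : s + t = 0.
  by have := congr1 mxtrace comb0; rewrite mxtraceD !mxtraceZ !mxtrace_compress // !mulr1 mxtrace0.
have s0 : s = 0.
  move: comb0; have -> : t = - s by apply/eqP; rewrite -addr_eq0 addrC st0.
  rewrite scaleNr -scalerBr => /eqP; rewrite scaler_eq0 subr_eq0 (negbTE neq_ij) orbF.
  by move/eqP.
by split=> //; move: st0; rewrite s0 add0r.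
Qed.

Lemma exists_tangent_escape l0 c (u : 'cV_n) :
  (forall i, A i *m A i = A i) -> A l0 = delta_mx c c -> bm_feasible A Y ->
  (1 < p)%N -> (m <= p.+1)%N ->
  exists (z : 'rV_p) W, z != 0 /\ tangent A Y (u *m z + Y *m W).
Proof.
move=> A_idem Al0 Y_feas lt1p le_mp.
have [/forallP all_eq|] := boolP [forall i, compress i == compress l0].
  pose y := Y^T *m delta_mx c (0 : 'I_1).
  have compress_y i : compress i = y *m y^T.
    rewrite (eqP (all_eq i)) /compress Al0 -(mul_delta_mx (0 : 'I_1)).
    by rewrite trmx_mul trmx_delta trmxK !mulmxA.
  have [z z_neq0 z_tan] := tangent_dir_rank_one u A_idem compress_y lt1p.
  by exists z, 0; rewrite mulmx0 addr0.
rewrite negb_forall => /existsP[i0 neq_i0].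
pose B (b : 'I_2) := if b == ord0 then i0 else l0.
have [|x x_neq0 x_tan] := tangent_dir_span B u; first by rewrite addn2.
exists (lsubmx x), (\sum_b rsubmx x 0 b *: compress (B b)); split=> //.
apply: contra x_neq0 => /eqP z0.
have /span_dir_eq0 : forall j, \tr (compress j *m \sum_b rsubmx x 0 b *: compress (B b)) = 0.
  by move=> j; have := x_tan j; rewrite inner_constraint_dir z0 mul0mx mxE add0r.
rewrite big_ord_recl big_ord1 /B /= => /(compress_pair_indep Y_feas neq_i0)[t0_eq0 t1_eq0].
have t_eq0 : rsubmx x = 0.
  apply/rowP => b; rewrite [RHS]mxE; case: b => [[|[|//]] lt_b2];
    [rewrite -[RHS]t0_eq0 | rewrite -[RHS]t1_eq0]; congr (rsubmx x 0 _); exact: val_inj.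
by rewrite -[x]hsubmxK z0 t_eq0 row_mx0.
Qed.

Lemma psd_of_second_order (S : 'M[R]_n) l0 c :
  (forall i, A i *m A i = A i) -> A l0 = delta_mx c c -> bm_feasible A Y ->
  (1 < p)%N -> (m <= p.+1)%N -> S^T = S -> S *m Y = 0 ->
  (forall Yd, tangent A Y Yd -> 0 <= inner Yd (S *m Yd)) -> psd S.
Proof.
move=> A_idem Al0 Y_feas lt1p le_mp S_sym SY0 S_curv; split=> // u.
rewrite leNgt; apply/negP => S_neg.
have [z [W [z_neq0 z_tan]]] := exists_tangent_escape u A_idem Al0 Y_feas lt1p le_mp.
have := S_curv _ z_tan; rewrite inner_escape_dir // (nmulr_rge0 _ S_neg) => z_le0.
by move: z_neq0; rewrite -mxtrace_tmul_eq0 eq_le z_le0 mxtrace_tmul_ge0.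
Qed.

End EscapeDirections.

Section Spheres.
Variables (R : realType) (k : nat) (ns : 'I_k -> nat).

Lemma spheresA_sym i : (spheresA R ns i)^T = spheresA R ns i.
Proof. by apply/matrixP => a b; rewrite !mxE eq_sym; case: eqP => // ->. Qed.

Lemma spheresA_idem i : spheresA R ns i *m spheresA R ns i = spheresA R ns i.
Proof.
apply/matrixP => a b; rewrite mxE (bigD1 a) //= big1 => [|d /negbTE d_neq_a]; last first.
  by rewrite !mxE eq_sym d_neq_a mul0r.
by rewrite addr0 !mxE eqxx; case: in_block; rewrite ?mul1r ?andbF ?mul0r.
Qed.

Lemma in_block_last (a : 'I_(nsum ns).+1) : in_block ord_max a = (a == ord_max).
Proof.
rewrite /in_block eqxx /=; case: existsP => // -[l /andP[/eqP l_k _]].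
by have := ltn_ord l; rewrite l_k ltnn.
Qed.

Lemma spheresA_last : spheresA R ns ord_max = delta_mx ord_max ord_max.
Proof.
apply/matrixP => a b; rewrite !mxE in_block_last.
have [->|/negbTE a_neq_b] := eqVneq a b; first by case: (b == ord_max).
by case: eqP => // a_max; rewrite -a_max eq_sym a_neq_b.
Qed.

End Spheres.

Theorem corollary7 (R : realType) (k : nat) (ns : 'I_k -> nat) (p : nat)
    (C : 'M[R]_((nsum ns).+1)) :
  (1 <= k)%N -> (forall i, 2 <= ns i)%N -> C^T = C -> (maxn 2 k <= p)%N ->
  forall Y : 'M[R]_((nsum ns).+1, p),
    second_order_critical (@spheresA R k ns) C Y ->
    bm_optimal (@spheresA R k ns) C Y /\
    sdp_optimal (@spheresA R k ns) C (Y *m Y^T).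
Proof.
move=> _ _ C_sym; rewrite geq_max => /andP[lt1p le_kp] Y [Y_feas SY0 S_curv].
have S_psd : psd (Smat (spheresA R ns) C Y).
  apply: (psd_of_second_order (spheresA_sym R ns) (spheresA_idem R ns)
    (spheresA_last R ns) Y_feas lt1p le_kp _ SY0 S_curv).
  exact: Smat_sym (spheresA_sym R ns) C_sym.
have Y_sdp := sdp_optimal_of_dual_certificate Y_feas S_psd SY0.
by split=> //; apply: bm_optimal_of_sdp_optimal.
Qed.
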